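(* Let $G$ be a finite irreducible ordered graph, and suppose that $G$ has at most one (up to order-isomorphism) irreducible induced ordered subgraph of order $3$, and at most one of order $4$. Then $G \in \mathcal{J}$.
   Context: Ordered graphs of order $n$ have vertex set $[n]$ with the natural order. A pair of vertices $u<v$ separates the edges of $G$ if every edge $ij$ ($i<j$) has $j\leqslant u$ or $v\leqslant i$; $G$ is irreducible if no pair separates its edges. For $n\in\mathbb{N}$: $J^{(n)}_1=K_n$; $J^{(n)}_2$ on $[n]$ with edge set $\{1n\}$ if $n\geqslant2$ (empty if $n=1$); $J^{(n)}_3$ on $[n]$ with edges $\{1i: 2\leqslant i\leqslant n\}$; $J^{(n)}_4$ on $[n]$ with edges $\{in: 1\leqslant i\leqslant n-1\}$; $L^{(n)}$ on $[n]$ with edges $\{i(i+1): 1\leqslant i\leqslant n-1\}$; $Q_1$ on $[4]$ with edges $\{13,24\}$; $Q_2$ on $[4]$ with edges $\{14,23\}$. $\mathcal{J}$ is the set of all ordered graphs $J^{(n)}_i$ ($i\in[4]$, $n\in\mathbb{N}$), $L^{(n)}$ ($n\in\mathbb{N}$), $Q_1$ and $Q_2$. *)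

(* Ordered graphs of order n: vertex set 'I_n = {0,...,n-1}
   (0-based version of [n] with its natural order), edges given by a
   symmetric irreflexive boolean relation. *)
From mathcomp Require Import all_boot.
Set Implicit Arguments. Unset Strict Implicit. Unset Printing Implicit Defensive.

Definition ograph (n : nat) (e : rel 'I_n) : Prop := symmetric e /\ irreflexive e.

Definition separates (n : nat) (e : rel 'I_n) (u v : 'I_n) : Prop :=
  forall i j : 'I_n, i < j -> e i j -> (j <= u) || (v <= i).

Definition irreducible (n : nat) (e : rel 'I_n) : Prop :=
  ~ exists u v : 'I_n, u < v /\ separates e u v.

Definition ord_iso (m k : nat) (e1 : rel 'I_m) (e2 : rel 'I_k) : Prop :=
  exists h : 'I_m -> 'I_k,
    [/\ bijective h,
        (forall x y : 'I_m, (h x < h y) = (x < y)) &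
        (forall x y : 'I_m, e2 (h x) (h y) = e1 x y)].

Definition strict_incr (k n : nat) (f : 'I_k -> 'I_n) : Prop :=
  forall i j : 'I_k, i < j -> f i < f j.

Definition induced (k n : nat) (e : rel 'I_n) (f : 'I_k -> 'I_n) : rel 'I_k :=
  fun i j => e (f i) (f j).

Definition at_most_one_irred (n : nat) (e : rel 'I_n) (k : nat) : Prop :=
  forall f g : 'I_k -> 'I_n, strict_incr f -> strict_incr g ->
    irreducible (induced e f) -> irreducible (induced e g) ->
    ord_iso (induced e f) (induced e g).

(* The graphs of the family J, on vertex set {0,...,n-1} (0-based) *)
Definition J1 (n i j : nat) : bool := i != j.
Definition J2 (n i j : nat) : bool :=
  (i != j) && (((i == 0) && (j == n.-1)) || ((j == 0) && (i == n.-1))).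
Definition J3 (n i j : nat) : bool :=
  ((i == 0) && (j != 0)) || ((j == 0) && (i != 0)).
Definition J4 (n i j : nat) : bool :=
  ((i == n.-1) && (j != n.-1)) || ((j == n.-1) && (i != n.-1)).
Definition Lg (n i j : nat) : bool := (i == j.+1) || (j == i.+1).
Definition Q1 (i j : nat) : bool :=
  [|| (i == 0) && (j == 2), (i == 2) && (j == 0),
      (i == 1) && (j == 3) | (i == 3) && (j == 1)].
Definition Q2 (i j : nat) : bool :=
  [|| (i == 0) && (j == 3), (i == 3) && (j == 0),
      (i == 1) && (j == 2) | (i == 2) && (j == 1)].

Definition same_graph (n : nat) (e : rel 'I_n) (r : nat -> nat -> bool) : Prop :=
  forall i j : 'I_n, e i j = r i j.

(* G belongs to the family J (ordered graphs on [n] are equal iff they have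
   the same edges) *)
Definition in_J (n : nat) (e : rel 'I_n) : Prop :=
  same_graph e (J1 n) \/ same_graph e (J2 n) \/ same_graph e (J3 n) \/
  same_graph e (J4 n) \/ same_graph e (Lg n) \/
  (n = 4 /\ same_graph e Q1) \/ (n = 4 /\ same_graph e Q2).

From mathcomp Require Import all_boot.
From mathcomp Require Import zify.
Set Implicit Arguments. Unset Strict Implicit. Unset Printing Implicit Defensive.

(* An ordered graph on 0 < ... < m is irreducible iff every gap between
   consecutive vertices is crossed by an edge, and an order-isomorphism
   between two ordered graphs on the same vertex set is the identity; so the
   hypotheses say that all irreducible induced triples, resp. quadruples, have
   one and the same edge pattern.  There are five irreducible triple patterns,
   and the vertices 0 < 1 < c form an irreducible triple for some c.  Pushing
   the pattern along the crossing edges gives K_n (triangle), L_n (path) or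
   J_3, J_4 (the two cherries).  For the last pattern, a lone edge ac: if 0m
   is an edge, every 0 x y m is an irreducible quadruple, so all inner pairs
   xy agree and G is J_2, or Q_2 with n = 4; otherwise comparing quadruples
   forces the two crossing edges 02, 13 and n = 4, i.e. Q_1. *)

Definition gaps_crossed (m : nat) (E : rel nat) : Prop :=
  forall u, u < m -> exists i j, [/\ i <= u, u < j, j <= m & E i j].

Definition agree_upto (m : nat) (E R : rel nat) : Prop :=
  forall x y, x < y -> y <= m -> E x y = R x y.

Lemma irreducibleP m (e : rel 'I_m.+1) (E : rel nat) :
  (forall i j : 'I_m.+1, e i j = E i j) -> irreducible e <-> gaps_crossed m E.
Proof.
move=> eE; split=> [irr u um | cross [u [v [uv sep]]]].
- have [/existsP[i /existsP[j /and3P[iu uj eij]]] | none] :=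
    boolP [exists i : 'I_m.+1, exists j : 'I_m.+1, [&& i <= u, u < j & e i j]].
    by exists i, j; rewrite leq_ord -eE.
  case: irr; exists (inord u), (inord u.+1); rewrite /separates !inordK; try lia.
  split=> // i j _ eij; rewrite leqNgt orbC leqNgt -negb_and.
  apply: contra none => /andP[ui ju].
  by apply/existsP; exists i; apply/existsP; exists j; rewrite -ltnS ui ju eij.
- have [i [j [iu uj jm Eij]]] := cross u (leq_trans uv (leq_ord v)).
  have := sep (inord i) (inord j); rewrite eE !inordK; lia.
Qed.

Lemma ord_incr_ge k (h : 'I_k -> 'I_k) : {homo h : x y / x < y} -> forall x : 'I_k, x <= h x.
Proof.
move=> incr [x]; elim: x => [|x IHx] // ltxk.
exact: leq_ltn_trans (IHx (ltnW ltxk)) (incr (Ordinal (ltnW ltxk)) (Ordinal ltxk) (ltnSn x)).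
Qed.

Lemma ord_iso_eq k (r1 r2 : rel 'I_k) : ord_iso r1 r2 -> r1 =2 r2.
Proof.
case=> h [[g hK Kh] mono edge] x y.
have h_incr : {homo h : u v / u < v} by move=> u v; rewrite mono.
have g_incr : {homo g : u v / u < v} by move=> u v uv; rewrite -mono !Kh.
have h_id z : h z = z.
  apply/val_inj/eqP; rewrite eqn_leq (ord_incr_ge h_incr) andbT.
  by rewrite -{2}(hK z) (ord_incr_ge g_incr).
by rewrite -edge !h_id.
Qed.

Definition sub_rel (E : rel nat) (s : seq nat) : rel nat :=
  fun i j => E (nth 0 s i) (nth 0 s j).

Section NatEncoding.
Variables (m : nat) (e : rel 'I_m.+1).

(* [inord] sends every number beyond [m] to [ord0]; all statements below only
   look at vertices [<= m]. *)
Definition nat_rel : rel nat := fun x y => e (inord x) (inord y).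

Lemma nat_relE (i j : 'I_m.+1) : e i j = nat_rel i j.
Proof. by rewrite /nat_rel !inord_val. Qed.

Definition of_seq k (s : seq nat) (i : 'I_k) : 'I_m.+1 := inord (nth 0 s i).
Arguments of_seq : clear implicits.

Lemma strict_incr_of_seq k s :
  size s = k -> sorted ltn s -> all (leq^~ m) s -> strict_incr (of_seq k s).
Proof.
move=> size_s sorted_s le_s_m i j ij.
have [lt_i lt_j] : i < size s /\ j < size s by rewrite size_s !ltn_ord.
rewrite /of_seq !inordK ?ltnS; try exact: (all_nthP 0 le_s_m).
exact: (sorted_ltn_nth ltn_trans 0 sorted_s).
Qed.

Lemma induced_of_seq_agree k s t : at_most_one_irred e k.+1 ->
    size s = k.+1 -> size t = k.+1 -> sorted ltn s -> sorted ltn t ->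
    all (leq^~ m) s -> all (leq^~ m) t ->
    gaps_crossed k (sub_rel nat_rel s) -> gaps_crossed k (sub_rel nat_rel t) ->
  agree_upto k (sub_rel nat_rel s) (sub_rel nat_rel t).
Proof.
move=> uniq size_s size_t sorted_s sorted_t le_s le_t cross_s cross_t i j ij jk.
have irr r : gaps_crossed k (sub_rel nat_rel r) -> irreducible (induced e (of_seq k.+1 r)).
  exact: (irreducibleP (fun _ _ => erefl)).2.
have iso := uniq _ _ (strict_incr_of_seq size_s sorted_s le_s)
  (strict_incr_of_seq size_t sorted_t le_t) (irr _ cross_s) (irr _ cross_t).
exact: ord_iso_eq iso (Ordinal (ltnW (leq_trans ij jk) : i < k.+1)) (Ordinal (jk : j < k.+1)).
Qed.

End NatEncoding.

Definition irreducible3 (E : rel nat) a b c := (E a b || E a c) && (E a c || E b c).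

Definition irreducible4 (E : rel nat) a b c d :=
  [&& E a b || E a c || E a d, E a c || E a d || E b c || E b d
    & E a d || E b d || E c d].

Definition type3 (E : rel nat) a b c := (E a b, E a c, E b c).

Definition type4 (E : rel nat) a b c d := (E a b, E a c, E a d, E b c, E b d, E c d).

Definition uniform_triples m (E : rel nat) := forall a b c a' b' c',
  a < b -> b < c -> c <= m -> a' < b' -> b' < c' -> c' <= m ->
  irreducible3 E a b c -> irreducible3 E a' b' c' -> type3 E a b c = type3 E a' b' c'.

Definition uniform_quads m (E : rel nat) := forall a b c d a' b' c' d',
  a < b -> b < c -> c < d -> d <= m -> a' < b' -> b' < c' -> c' < d' -> d' <= m ->
  irreducible4 E a b c d -> irreducible4 E a' b' c' d' ->
  type4 E a b c d = type4 E a' b' c' d'.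

Lemma gaps_crossed3 E a b c :
  irreducible3 E a b c -> gaps_crossed 2 (sub_rel E [:: a; b; c]).
Proof.
case/andP=> cross0 cross1 [|[|u]] // _.
- by case/orP: cross0 => ?; [exists 0, 1 | exists 0, 2].
- by case/orP: cross1 => ?; [exists 0, 2 | exists 1, 2].
Qed.

Lemma gaps_crossed4 E a b c d :
  irreducible4 E a b c d -> gaps_crossed 3 (sub_rel E [:: a; b; c; d]).
Proof.
case/and3P=> cross0 cross1 cross2 [|[|[|u]]] // _.
- by case/orP: cross0 => [/orP[]|] ?; [exists 0, 1 | exists 0, 2 | exists 0, 3].
- by case/orP: cross1 => [/orP[/orP[]|]|] ?;
    [exists 0, 2 | exists 0, 3 | exists 1, 2 | exists 1, 3].
- by case/orP: cross2 => [/orP[]|] ?; [exists 0, 3 | exists 1, 3 | exists 2, 3].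
Qed.

Lemma uniform_triples_nat_rel m (e : rel 'I_m.+1) :
  at_most_one_irred e 3 -> uniform_triples m (nat_rel e).
Proof.
move=> uniq a b c a' b' c' ab bc cm ab' bc' cm' irr irr'.
have same : agree_upto 2 (sub_rel (nat_rel e) [:: a; b; c])
                        (sub_rel (nat_rel e) [:: a'; b'; c']).
  by apply: induced_of_seq_agree (gaps_crossed3 irr) (gaps_crossed3 irr') => //=; lia.
by move: (same 0 1) (same 0 2) (same 1 2); rewrite /sub_rel /type3 /= => -> // -> // -> //.
Qed.

Lemma uniform_quads_nat_rel m (e : rel 'I_m.+1) :
  at_most_one_irred e 4 -> uniform_quads m (nat_rel e).
Proof.
move=> uniq a b c d a' b' c' d' ab bc cd dm ab' bc' cd' dm' irr irr'.
have same : agree_upto 3 (sub_rel (nat_rel e) [:: a; b; c; d])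
                        (sub_rel (nat_rel e) [:: a'; b'; c'; d']).
  by apply: induced_of_seq_agree (gaps_crossed4 irr) (gaps_crossed4 irr') => //=; lia.
move: (same 0 1) (same 0 2) (same 0 3) (same 1 2) (same 1 3) (same 2 3).
by rewrite /sub_rel /type4 /= => -> // -> // -> // -> // -> // -> //.
Qed.

Definition triples_of_type m (E : rel nat) t := forall a b c,
  a < b -> b < c -> c <= m -> irreducible3 E a b c -> type3 E a b c = t.

Lemma irreducible3_long (E : rel nat) a b c : E a c -> irreducible3 E a b c.
Proof. by rewrite /irreducible3 => ->; rewrite orbT. Qed.

Lemma irreducible3_path (E : rel nat) a b c : E a b -> E b c -> irreducible3 E a b c.
Proof. by rewrite /irreducible3 => -> ->; rewrite orbT. Qed.

Lemma irreducible4_long (E : rel nat) a b c d : E a d -> irreducible4 E a b c d.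
Proof. by rewrite /irreducible4 => ->; rewrite !orbT. Qed.

Section Shapes.
Variables (m : nat) (E : rel nat).
Hypothesis cross : gaps_crossed m E.

Lemma complete_of_triples : triples_of_type m E (true, true, true) -> agree_upto m E (J1 m.+1).
Proof.
move=> P.
have sides a b c : a < b -> b < c -> c <= m -> E a c -> E a b /\ E b c.
  by move=> ab bc cm /(irreducible3_long b)/(P _ _ _ ab bc cm) [-> _ ->].
have step x : x < m -> E x x.+1.
  move=> xm; have [i [j [ix xj jm Eij]]] := cross xm.
  have Exj : E x j by case: (ltngtP i x) ix Eij => // [ix _ /(sides _ _ _ ix xj jm)[]|->].
  by case: (ltngtP x.+1 j) xj Exj => // [lt_x1j _ /(sides _ _ _ (ltnSn x) lt_x1j jm)[]|<-].
have edge y x : x < y -> y <= m -> E x y.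
  elim: y x => // y IHy x; rewrite ltnS leq_eqVlt => /predU1P[-> | xy] ym; first exact: step.
  have Exy := IHy x xy (ltnW ym).
  by case: (P _ _ _ xy (ltnSn y) ym (irreducible3_path Exy (step y ym))).
by move=> x y xy ym; rewrite edge // /J1 (ltn_eqF xy).
Qed.

Lemma path_of_triples : triples_of_type m E (true, false, true) -> agree_upto m E (Lg m.+1).
Proof.
move=> P.
have no_long a c : a.+1 < c -> c <= m -> ~~ E a c.
  move=> ac cm; apply/negP => Eac.
  by move: (P _ _ _ (ltnSn a) ac cm (irreducible3_long a.+1 Eac)); rewrite /type3 Eac.
have step x : x < m -> E x x.+1.
  move=> xm; have [i [j [ix xj jm Eij]]] := cross xm.
  have [lt_i1j | ] := ltnP i.+1 j; first by rewrite (negbTE (no_long _ _ lt_i1j jm)) in Eij.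
  by move=> ji; have [-> ->] : x.+1 = j /\ x = i by lia.
move=> x y xy; rewrite /Lg (ltn_eqF (leqW xy)) /=.
have [-> ym | y_ne ym] := eqVneq y x.+1; first by rewrite step.
have lt_x1y : x.+1 < y by lia.
exact/negbTE/(no_long _ _ lt_x1y ym).
Qed.

Lemma first_star_of_triples :
  triples_of_type m E (true, true, false) -> agree_upto m E (J3 m.+1).
Proof.
move=> P.
have inner x y : 0 < x -> x < y -> y <= m -> ~~ E x y.
  move=> x0 xy ym; apply/negP => Exy.
  have no_left i : i < x -> ~~ E i x.
    move=> ix; apply/negP => Eix.
    by move: (P _ _ _ ix xy ym (irreducible3_path Eix Exy)); rewrite /type3 Exy.
  have [i [j [ix xj jm Eij]]] := @cross x.-1 ltac:(lia).
  have {}ix : i < x by lia.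
  have [xj' | {}xj] : x = j \/ x < j by lia.
    by move: (no_left i ix); rewrite xj' Eij.
  by case: (P _ _ _ ix xj jm (irreducible3_long x Eij)) (no_left i ix) => ->.
have from_first y : 0 < y -> y <= m -> E 0 y.
  move=> y0 ym; have [i [j [iy yj jm Eij]]] := @cross y.-1 ltac:(lia).
  have [i_pos | i0] : 0 < i \/ i = 0 by lia.
    by move: (inner i j i_pos ltac:(lia) jm); rewrite Eij.
  move: Eij; rewrite i0; have [<- // | {}yj] : y = j \/ y < j by lia.
  by move/(irreducible3_long y)/(P _ _ _ y0 yj jm) => [].
move=> x y xy ym; rewrite /J3 (gtn_eqF (leq_ltn_trans (leq0n x) xy)) /= orbF.
case: posnP => [x0 | x_pos]; last by rewrite (negbTE (inner _ _ x_pos xy ym)).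
by rewrite x0 from_first // -x0.
Qed.

Lemma last_star_of_triples :
  triples_of_type m E (false, true, true) -> agree_upto m E (J4 m.+1).
Proof.
move=> P.
have inner x y : x < y -> y < m -> ~~ E x y.
  move=> xy ym; apply/negP => Exy.
  have no_right z : y < z -> z <= m -> ~~ E y z.
    move=> yz zm; apply/negP => Eyz.
    by move: (P _ _ _ xy yz zm (irreducible3_path Exy Eyz)); rewrite /type3 Exy.
  have [i [j [iy yj jm Eij]]] := cross ym.
  have [ey | {}iy] : i = y \/ i < y by lia.
    by move: (no_right j yj jm); rewrite -ey Eij.
  by case: (P _ _ _ iy yj jm (irreducible3_long y Eij)) (no_right j yj jm) => _ _ ->.
have to_last x : x < m -> E x m.
  move=> xm; have [i [j [ix xj jm Eij]]] := cross xm.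
  have [lt_jm | jm'] : j < m \/ j = m by lia.
    by move: (inner i j ltac:(lia) lt_jm); rewrite Eij.
  move: Eij; rewrite jm'; have [-> // | {}ix] : i = x \/ i < x by lia.
  by move/(irreducible3_long x)/(P _ _ _ ix xm (leqnn m)) => [].
move=> x y xy ym; rewrite /J4 /= (ltn_eqF (leq_trans xy ym)) /= andbT.
have [ym' | y_ne] := eqVneq y m; first by rewrite ym' to_last // -ym'.
by rewrite (negbTE (inner x y xy ltac:(lia))).
Qed.

End Shapes.

Section SingleLongEdge.
Variables (m : nat) (E : rel nat).
Hypotheses (cross : gaps_crossed m E) (P : triples_of_type m E (false, true, false)).
Hypothesis uniform4 : uniform_quads m E.

Lemma no_two_path a b c : a < b -> b < c -> c <= m -> E a b -> ~~ E b c.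
Proof.
move=> ab bc cm Eab; apply/negP => Ebc.
by move: (P ab bc cm (irreducible3_path Eab Ebc)); rewrite /type3 Eab.
Qed.

Lemma long_edge_isolates a b c :
  a < b -> b < c -> c <= m -> E a c -> E a b = false /\ E b c = false.
Proof. by move=> ab bc cm /(irreducible3_long b)/(P ab bc cm) [-> _ ->]. Qed.

Lemma no_inner_edge : E 0 m -> 3 < m -> forall x y, 0 < x -> x < y -> y < m -> ~~ E x y.
Proof.
move=> E0m m_gt3 x y x0 xy ym; apply/negP => Exy.
have [u [v [u0 uv vm nEuv]]] : exists u v, [/\ 0 < u, u < v, v < m & ~~ E u v].
  have [E12 | nE12] := boolP (E 1 2); last by exists 1, 2; split=> //; lia.
  by exists 2, 3; split=> //; apply: no_two_path E12; lia.
move: (uniform4 x0 xy ym (leqnn m) u0 uv vm (leqnn m)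
  (irreducible4_long x y E0m) (irreducible4_long u v E0m)).
by rewrite /type4 Exy (negbTE nEuv).
Qed.

Lemma J2_or_Q2_of_long_edge :
  E 0 m -> agree_upto m E (J2 m.+1) \/ (m = 3 /\ agree_upto m E Q2).
Proof.
move=> E0m.
have [[m3 E12] | no_inner] :
    (m = 3 /\ E 1 2) \/ forall x y, 0 < x -> x < y -> y < m -> ~~ E x y.
  have [m_gt3 | m_le3] := ltnP 3 m; first by right; exact: no_inner_edge.
  case E12: (E 1 2); [have [m3 | m_lt3] := eqVneq m 3; [by left | right] | right].
  - by move=> x y *; lia.
  - by move=> [|[|[|x]]] [|[|[|y]]] //= *; rewrite ?E12 //; lia.
- right; split=> //; rewrite m3 in E0m *.
  have m_ge3 : 3 <= m by rewrite m3.
  have [E01 E13] := long_edge_isolates (isT : 0 < 1) (isT : 1 < 3) m_ge3 E0m.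
  have [E02 E23] := long_edge_isolates (isT : 0 < 2) (isT : 2 < 3) m_ge3 E0m.
  by move=> [|[|[|[|x]]]] [|[|[|[|y]]]] //=.
left=> x y xy ym.
rewrite /J2 /= (ltn_eqF xy) (gtn_eqF (leq_ltn_trans (leq0n x) xy)) /= orbF.
have [x0 | x_pos] := posnP x; have [ym' | y_ne] := eqVneq y m.
- by rewrite x0 ym'.
- by rewrite x0 (long_edge_isolates (leq_ltn_trans (leq0n x) xy) _ (leqnn m) E0m).1 //; lia.
- by rewrite ym' (long_edge_isolates x_pos _ (leqnn m) E0m).2 //; rewrite -ym'.
- by apply/negbTE/no_inner => //; lia.
Qed.

Lemma crossing_edges_of_no_long_edge :
  1 < m -> ~~ E 0 m -> [/\ E 0 2, E 1 3, ~~ E 0 3 & 3 <= m].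
Proof.
move=> m_gt1 nE0m.
have [j [j0 jm E0j]] : exists j, [/\ 0 < j, j < m & E 0 j].
  have [i [j [i0 j0 jm Eij]]] := @cross 0 ltac:(lia).
  have {}i0 : i = 0 by lia.
  rewrite i0 in Eij; exists j; split=> //; rewrite ltn_neqAle jm andbT.
  by apply: contraNneq nE0m => <-.
have [p [q [pj jq qm Epq]]] := cross jm.
have nE0q : ~~ E 0 q by apply/negP => /(long_edge_isolates j0 jq qm) []; rewrite E0j.
have p0 : 0 < p by case: posnP Epq => // ->; rewrite (negbTE nE0q).
have {}pj : p < j.
  rewrite ltn_neqAle pj andbT; apply: contraTneq Epq => ->.
  exact: no_two_path j0 jq qm E0j.
have irr_0pjq : irreducible4 E 0 p j q by rewrite /irreducible4 E0j Epq !orbT.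
have j2 : j = 2.
  have [j_gt2 | ] := ltnP 2 j; last by lia.
  move: (uniform4 p0 pj jq qm (isT : 0 < 1) (isT : 1 < 2) j_gt2 (ltnW jm)
    irr_0pjq (irreducible4_long 1 2 E0j)).
  by rewrite /type4 E0j (negbTE nE0q).
have p1 : p = 1 by lia.
rewrite j2 p1 in E0j Epq jq irr_0pjq.
have q3 : q = 3.
  have [q_gt3 | ] := ltnP 3 q; last by lia.
  move: (uniform4 (isT : 0 < 1) (isT : 1 < 2) jq qm (isT : 1 < 2) (isT : 2 < 3) q_gt3 qm
    irr_0pjq (irreducible4_long 2 3 Epq)).
  by rewrite /type4 Epq (negbTE nE0q).
by rewrite -q3.
Qed.

Lemma Q1_of_no_long_edge : 1 < m -> ~~ E 0 m -> m = 3 /\ agree_upto m E Q1.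
Proof.
move=> m_gt1 nE0m.
have [E02 E13 nE03 m_ge3] := crossing_edges_of_no_long_edge m_gt1 nE0m.
have m3 : m = 3.
  have [m_gt3 | ] := ltnP 3 m; last by lia.
  have [i [k [i3 k3 km Eik]]] := cross m_gt3.
  exfalso; move: Eik; have [-> | [-> | [-> | ->]]] : i = 0 \/ i = 1 \/ i = 2 \/ i = 3 by lia.
  - by move/(long_edge_isolates (isT : 0 < 2) (ltnW k3) km) => []; rewrite E02.
  - by move/(long_edge_isolates (isT : 1 < 3) k3 km) => []; rewrite E13.
  - exact/negP/(no_two_path (isT : 0 < 2) (ltnW k3) km E02).
  - exact/negP/(no_two_path (isT : 1 < 3) k3 km E13).
split=> //; rewrite m3.
have [E01 E12] := long_edge_isolates (isT : 0 < 1) (isT : 1 < 2) (ltnW m_ge3) E02.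
have [_ E23] := long_edge_isolates (isT : 1 < 2) (isT : 2 < 3) m_ge3 E13.
by move=> [|[|[|[|x]]]] [|[|[|[|y]]]] //=; rewrite ?(negbTE nE03).
Qed.

End SingleLongEdge.

Definition J_family m (E : rel nat) : Prop :=
  agree_upto m E (J1 m.+1) \/ agree_upto m E (J2 m.+1) \/ agree_upto m E (J3 m.+1) \/
  agree_upto m E (J4 m.+1) \/ agree_upto m E (Lg m.+1) \/
  (m = 3 /\ agree_upto m E Q1) \/ (m = 3 /\ agree_upto m E Q2).

Lemma irreducible_triple_at_0 m (E : rel nat) :
  gaps_crossed m E -> 1 < m -> exists c, [/\ 1 < c, c <= m & irreducible3 E 0 1 c].
Proof.
move=> cross m_gt1.
have [i [j [i0 j0 jm E0j]]] := cross 0 ltac:(lia).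
have {}i0 : i = 0 by lia.
rewrite i0 in E0j.
have [j_gt1 | j1] : 1 < j \/ j = 1 by lia.
  by exists j; split=> //; exact: irreducible3_long _ E0j.
have [i' [k [i1 k1 km Ei'k]]] := cross 1 m_gt1.
exists k; split=> //.
have [i'0 | i'1] : i' = 0 \/ i' = 1 by lia.
- by rewrite i'0 in Ei'k; exact: irreducible3_long _ Ei'k.
- by rewrite j1 in E0j; rewrite i'1 in Ei'k; exact: irreducible3_path E0j Ei'k.
Qed.

Lemma J_family_of_uniform m (E : rel nat) :
  gaps_crossed m E -> uniform_triples m E -> uniform_quads m E -> J_family m E.
Proof.
move=> cross uniform3 uniform4.
have [m_lt2 | m_gt1] := ltnP m 2.
  (* no triples at all: irreducibility alone gives K_1 or K_2 *)
  by left; apply: complete_of_triples => // a b c *; lia.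
have [c [c1 cm irr01c]] := irreducible_triple_at_0 cross m_gt1.
have P : triples_of_type m E (type3 E 0 1 c).
  by move=> a b c' ab bc cm' irr; exact: uniform3 ab bc cm' (isT : 0 < 1) c1 cm irr irr01c.
move: P irr01c; rewrite /type3 /irreducible3.
case: (E 0 1) (E 0 c) (E 1 c) => [] [] [] //= P _.
- by left; apply: complete_of_triples.
- by do 2 right; left; apply: first_star_of_triples.
- by do 4 right; left; apply: path_of_triples.
- by do 3 right; left; apply: last_star_of_triples.
have [E0m | nE0m] := boolP (E 0 m).
  by case: (J2_or_Q2_of_long_edge P uniform4 E0m) => [|[m3 Q2]]; [right; left | do 6 right].
by do 5 right; left; exact: Q1_of_no_long_edge.
Qed.

Lemma same_graph_of_agree m (e : rel 'I_m.+1) (R : rel nat) :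
  ograph e -> agree_upto m (nat_rel e) R -> symmetric R -> irreflexive R -> same_graph e R.
Proof.
move=> [e_sym e_irr] agree R_sym R_irr i j.
case: (ltngtP i j) => [ij | ji | /val_inj ->]; last by rewrite e_irr R_irr.
- by rewrite nat_relE agree ?leq_ord.
- by rewrite e_sym R_sym nat_relE agree ?leq_ord.
Qed.

Lemma in_J_of_family m (e : rel 'I_m.+1) : ograph e -> J_family m (nat_rel e) -> in_J e.
Proof.
move=> ge; have agree R := @same_graph_of_agree m e R ge.
case=> [h|[h|[h|[h|[h|[[m3 h]|[m3 h]]]]]]].
- left; apply: (agree _ h) => [x y | x]; by rewrite /J1 ?eqxx // eq_sym.
- do 1 right; left; apply: (agree _ h) => [x y | x]; by rewrite /J2 ?eqxx // eq_sym orbC.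
- do 2 right; left; apply: (agree _ h) => [x y | x]; by rewrite /J3 ?andbN // orbC.
- do 3 right; left; apply: (agree _ h) => [x y | x]; by rewrite /J4 ?andbN // orbC.
- do 4 right; left; apply: (agree _ h) => [x y | x]; rewrite /Lg; first exact: orbC.
  by rewrite (ltn_eqF (ltnSn x)).
- do 5 right; left; split; first by rewrite m3.
  by apply: (agree _ h) => [[|[|[|[|x]]]] [|[|[|[|y]]]] | [|[|[|[|x]]]]].
- do 6 right; split; first by rewrite m3.
  by apply: (agree _ h) => [[|[|[|[|x]]]] [|[|[|[|y]]]] | [|[|[|[|x]]]]].
Qed.

Theorem lemma18 (n : nat) (e : rel 'I_n) :
  ograph e -> irreducible e ->
  at_most_one_irred e 3 -> at_most_one_irred e 4 ->
  in_J e.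
Proof.
case: n e => [|m] e ge irr uniq3 uniq4; first by left; case.
apply: in_J_of_family ge (J_family_of_uniform _ _ _).
- exact: (irreducibleP (@nat_relE _ e)).1.
- exact: uniform_triples_nat_rel.
- exact: uniform_quads_nat_rel.
Qed.
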